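(* Let $n\ge 3$. For every point $x\in Gr^{>0}(2,n)$ one has $E(x)\ge E([C])=\dfrac{\sin(\lfloor n/2\rfloor\pi/n)}{\sin(\pi/n)}$. In particular, the row span $[C]$ of the cyclic matrix $C$ (which lies in $Gr^{>0}(2,n)$) minimizes $E$ on $Gr^{>0}(2,n)$.
   Context: For a real $2\times n$ matrix $X$ and $1\le i<j\le n$, let $\Delta_{i,j}(X)$ denote the determinant of the $2\times 2$ submatrix formed by columns $i$ and $j$ of $X$ (the Plücker coordinates of the row span $[X]$; they are determined by $[X]$ up to a common nonzero scalar). $Gr(2,n)$ is the Grassmannian of 2-dimensional subspaces of $\mathbb{R}^n$; the positive Grassmannian $Gr^{>0}(2,n)$ is the set of $x\in Gr(2,n)$ having a spanning $2\times n$ matrix $X$ (rows spanning $x$) with $\Delta_{i,j}(X)>0$ for all $1\le i<j\le n$. The loss function is $E(x)=\max_{i<j}\Delta_{i,j}(X)/\min_{i<j}\Delta_{i,j}(X)$, which does not depend on the choice of such $X$. The cyclic matrix $C$ is the $2\times n$ matrix whose $m$-th column is $(\cos((m-1)\pi/n),\ \sin((m-1)\pi/n))^T$ for $m=1,\dots,n$. *)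

From HB Require Import structures.
From mathcomp Require Import all_boot all_order all_algebra.
From mathcomp Require Import reals trigo.
Set Implicit Arguments. Unset Strict Implicit. Unset Printing Implicit Defensive.
Import Order.TTheory GRing.Theory Num.Theory.
Local Open Scope ring_scope.

Section Grassmann.
Variable R : realType.

Definition plucker (n : nat) (X : 'M[R]_(2, n)) (i j : 'I_n) : R :=
  X ord0 i * X ord_max j - X ord0 j * X ord_max i.

Definition pluckers (n : nat) (X : 'M[R]_(2, n)) : seq R :=
  [seq plucker X ij.1 ij.2 | ij : 'I_n * 'I_n <- [seq (i, j) | i <- enum 'I_n, j <- enum 'I_n]
     & ij.1 < ij.2]%N.

Definition max_plucker (n : nat) (X : 'M[R]_(2, n)) : R :=
  \big[Num.max/head 0 (pluckers X)]_(d <- pluckers X) d.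

Definition min_plucker (n : nat) (X : 'M[R]_(2, n)) : R :=
  \big[Num.min/head 0 (pluckers X)]_(d <- pluckers X) d.

(* X spans a point of the positive Grassmannian Gr^{>0}(2,n) *)
Definition totally_positive (n : nat) (X : 'M[R]_(2, n)) : Prop :=
  forall i j : 'I_n, (i < j)%N -> 0 < plucker X i j.

Definition lossE (n : nat) (X : 'M[R]_(2, n)) : R :=
  max_plucker X / min_plucker X.

Definition cyclicC (n : nat) : 'M[R]_(2, n) :=
  \matrix_(i < 2, m < n)
    (if i == ord0 then cos (m%:R * pi / n%:R) else sin (m%:R * pi / n%:R)).

End Grassmann.

From HB Require Import structures.
From mathcomp Require Import all_boot all_order all_algebra.
From mathcomp Require Import reals trigo exp.
From mathcomp Require Import lra zify ring.
Set Implicit Arguments. Unset Strict Implicit. Unset Printing Implicit Defensive.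
Import Order.TTheory GRing.Theory Num.Theory.
Local Open Scope ring_scope.

(* Let X be totally positive.  Extending its columns twisted-periodically
   (column a + n = - column a) gives coordinates D(a,b) that are positive on
   every window a < b < a + n and satisfy the three-term Plücker relation.
   For the cyclic products P_k = prod_{a<n} D(a, a+k) the relation gives
   P_k^2 = prod_a (x_a + y_a) with prod x = P_{k-1} P_{k+1} and prod y = P_1^2,
   so superadditivity of the geometric mean makes g_k = P_k^(1/n) a
   supersolution of g_k^2 = g_{k-1} g_{k+1} + g_1^2, with g_0 = g_n = 0.
   The sine ratios s_k = sin(k pi/n) / sin(pi/n) solve s_k^2 = s_{k-1} s_{k+1} + 1,
   and a discrete minimum principle yields g_k >= s_k g_1.  Since every g_k lies
   between min Delta and max Delta, E(X) >= s_k for all 0 < k < n.  For C,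
   Delta_{ij}(C) = sin((j - i) pi/n), so E(C) = s_{n/2}, which is the bound. *)

Section GeometricMean.
Variable R : realType.
Variable n : nat.
Hypothesis n_gt0 : (0 < n)%N.

Definition nroot (t : R) : R := t `^ n%:R^-1.

Lemma nroot_ge0 t : 0 <= nroot t. Proof. exact: powR_ge0. Qed.

Lemma nrootK t : 0 <= t -> nroot t ^+ n = t.
Proof.
move=> t_ge0; rewrite /nroot -powR_mulrn ?powR_ge0 // -powRrM mulVf ?powRr1 //.
by rewrite pnatr_eq0 -lt0n.
Qed.

Lemma geomean_le_mean_ratio (u w : 'I_n -> R) (U : R) :
  (forall i, 0 <= u i) -> (forall i, 0 < w i) -> 0 <= U ->
  U ^+ n <= \prod_i u i ->
  U <= (\sum_i u i / w i) / n%:R * nroot (\prod_i w i).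
Proof.
move=> u_ge0 w_gt0 U_ge0 hU.
have W_gt0 : 0 < \prod_i w i by apply: prodr_gt0.
have ratio_ge0 i : 0 <= u i / w i by rewrite divr_ge0 // ltW.
have mean_ge0 : 0 <= (\sum_i u i / w i) / n%:R by rewrite divr_ge0 ?sumr_ge0.
rewrite -(ler_pXn2r n_gt0) ?nnegrE //; last by rewrite mulr_ge0 ?nroot_ge0.
rewrite exprMn (nrootK (ltW W_gt0)); apply: le_trans hU _.
have -> : \prod_i u i = (\prod_i (u i / w i)) * \prod_i w i.
  by rewrite -big_split /=; apply: eq_bigr => i _; rewrite divfK // gt_eqF.
rewrite ler_pM2r //.
have := @leif_AGM R _ predT (fun i => u i / w i) (fun i _ => ratio_ge0 i).
by rewrite card_ord => /leif_le; apply.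
Qed.

Lemma geomean_superadditive (x y : 'I_n -> R) (X Y : R) :
  (forall i, 0 <= x i) -> (forall i, 0 < y i) -> 0 <= X -> 0 <= Y ->
  X ^+ n <= \prod_i x i -> Y ^+ n <= \prod_i y i ->
  (X + Y) ^+ n <= \prod_i (x i + y i).
Proof.
move=> x_ge0 y_gt0 X_ge0 Y_ge0 hX hY.
have xy_gt0 i : 0 < x i + y i by rewrite ltr_wpDl.
have y_ge0 i : 0 <= y i by apply: ltW.
have S_gt0 : 0 < \prod_i (x i + y i) by apply: prodr_gt0.
have means_sum1 : (\sum_i x i / (x i + y i)) / n%:R
                + (\sum_i y i / (x i + y i)) / n%:R = 1.
  rewrite -mulrDl -big_split /= (eq_bigr (fun=> 1)) => [|i _].
    by rewrite sumr_const card_ord divff // pnatr_eq0 -lt0n.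
  by rewrite -mulrDl divff // gt_eqF.
rewrite -(nrootK (ltW S_gt0)).
rewrite ler_pXn2r ?nnegrE ?addr_ge0 ?nroot_ge0 //.
have := lerD (geomean_le_mean_ratio x_ge0 xy_gt0 X_ge0 hX)
             (geomean_le_mean_ratio y_ge0 xy_gt0 Y_ge0 hY).
by rewrite -mulrDl means_sum1 mul1r.
Qed.

End GeometricMean.

Section ComparisonPrinciple.
Variable R : realType.

(* If g >= 0 is a "supersolution" of the
   recursion g_k^2 = g_{k-1} g_{k+1} + g_1^2 and s > 0 solves
   s_k^2 = s_{k-1} s_{k+1} + 1, both vanishing at 0 and n, then g >= g_1 s:
   at a minimiser k0 of g_k / s_k the ratio t satisfies t^2 >= g_1^2. *)
Lemma comparison_principle n (g s : nat -> R) : (2 <= n)%N ->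
  g 0 = 0 -> g n = 0 -> s 0 = 0 -> s n = 0 ->
  (forall k, (0 < k < n)%N -> 0 < s k) ->
  (forall k, (0 < k < n)%N -> 0 <= g k) ->
  (forall k, (0 < k < n)%N -> s k ^+ 2 = s k.-1 * s k.+1 + 1) ->
  (forall k, (0 < k < n)%N -> g k.-1 * g k.+1 + g 1 ^+ 2 <= g k ^+ 2) ->
  forall k, (0 < k < n)%N -> s k * g 1 <= g k.
Proof.
move=> n_ge2 g0 gn s0 sn s_gt0 g_ge0 s_rec g_rec.
have n_gt1 : (1 < n)%N by [].
have [k0 k0_pos k0_min] := @arg_minP _ _ 'I_n (Ordinal n_gt1) (fun k => 0 < k)%N
  (fun k : 'I_n => g k / s k) isT.
set t := g k0 / s k0.
have k0_int : (0 < k0 < n)%N by rewrite k0_pos ltn_ord.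
have t_ge0 : 0 <= t by rewrite divr_ge0 ?g_ge0 // ltW ?s_gt0.
have s_ge0 j : (j <= n)%N -> 0 <= s j.
  case: j => [|j] jn; first by rewrite s0.
  have [/eqP ->|j_ne] := boolP (j.+1 == n); first by rewrite sn.
  by apply/ltW/s_gt0; apply/andP; split => //; lia.
have below j : (j <= n)%N -> t * s j <= g j.
  case: j => [|j] jn; first by rewrite s0 g0 mulr0.
  have [/eqP ->|j_ne] := boolP (j.+1 == n); first by rewrite sn gn mulr0.
  have j_int : (0 < j.+1 < n)%N by apply/andP; split => //; lia.
  by rewrite -ler_pdivlMr ?s_gt0 // (k0_min (Ordinal (_ : j.+1 < n)%N)) //; lia.
have at_k0 : g k0 = t * s k0 by rewrite /t divfK // gt_eqF // s_gt0.
have neighbours : t * s k0.-1 * (t * s k0.+1) <= g k0.-1 * g k0.+1.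
  by apply: ler_pM; rewrite 1?mulr_ge0 ?below ?s_ge0 //; lia.
have g1_le_t : g 1 <= t.
  rewrite -(ler_pXn2r (isT : (0 < 2)%N)) ?nnegrE ?g_ge0 //.
  have := g_rec _ k0_int; rewrite at_k0 exprMn s_rec //.
  rewrite mulrACA -expr2 in neighbours; lra.
move=> k k_int; apply: le_trans (below k _); last by case/andP: k_int => _ /ltnW.
by rewrite mulrC ler_wpM2r // ltW ?s_gt0.
Qed.

End ComparisonPrinciple.

Section SineRatios.
Variable R : realType.
Variable n : nat.
Hypothesis n_gt0 : (0 < n)%N.

Definition angle (k : nat) : R := k%:R * pi / n%:R.
Definition sin_ratio (k : nat) : R := sin (angle k) / sin (angle 1).

Let n_pos : 0 < n%:R :> R. Proof. by rewrite ltr0n. Qed.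

Lemma angle_le a b : (a <= b)%N -> angle a <= angle b.
Proof. by move=> ab; rewrite ler_pM2r ?invr_gt0 // ler_pM2r ?ler_nat ?pi_gt0. Qed.

Lemma angle_n : angle n = pi.
Proof. by rewrite /angle mulrAC divff ?mul1r // gt_eqF. Qed.

Lemma angleB d : (d <= n)%N -> angle (n - d) = pi - angle d.
Proof. by move=> dn; rewrite -angle_n /angle natrB // !mulrBl. Qed.

Lemma angle_gt0 k : (0 < k)%N -> 0 < angle k.
Proof. by move=> k_gt0; rewrite divr_gt0 ?mulr_gt0 ?pi_gt0 ?ltr0n. Qed.

Lemma angle_lt_pi k : (k < n)%N -> angle k < pi.
Proof.
move=> kn; rewrite /angle ltr_pdivrMr //.
have : k%:R < n%:R :> R by rewrite ltr_nat.
have := pi_gt0 R; nra.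
Qed.

Lemma angle_le_pihalf k : (k + k <= n)%N -> angle k <= pi / 2.
Proof.
move=> kn; rewrite /angle ler_pdivrMr //.
have : k%:R + k%:R <= n%:R :> R by rewrite -natrD ler_nat.
have := pi_gt0 R; nra.
Qed.

Lemma sin_angle_gt0 k : (0 < k < n)%N -> 0 < sin (angle k).
Proof. by case/andP => k_gt0 kn; apply: sin_gt0_pi; rewrite angle_gt0 ?angle_lt_pi. Qed.

Lemma ler_sin : {in `[- (pi / 2), pi / 2] &, {mono (@sin R) : x y / x <= y}}.
Proof. by apply: le_mono_in => x y xI yI; rewrite ltr_sin. Qed.

Lemma sin_piB (x : R) : sin (pi - x) = sin x.
Proof. by rewrite addrC sinDpi sinN opprK. Qed.

Lemma sin_angle_bounds d : (0 < d < n)%N ->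
  sin (angle 1) <= sin (angle d) <= sin (angle n./2).
Proof.
have half : (n./2 + n./2 <= n <= n./2 + n./2 + 1)%N.
  by have := odd_double_half n; rewrite -addnn; case: (odd n) => /=; lia.
wlog d_le : d / (d <= n./2)%N => [sym|] dn.
  have [le|lt] := leqP d n./2; first exact: sym.
  by have := sym (n - d)%N ltac:(lia) ltac:(lia); rewrite angleB ?sin_piB //; lia.
have in_half k : (k <= n./2)%N -> angle k \in `[- (pi / 2), pi / 2].
  move=> k_le; rewrite in_itv /= angle_le_pihalf ?andbT; last by lia.
  have := @angle_le 0 k isT; rewrite {1}/angle !mul0r; have := pi_gt0 R; lra.
by apply/andP; split; rewrite ler_sin ?in_half ?angle_le //; lia.
Qed.

Lemma sin_ratio0 : sin_ratio 0 = 0.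
Proof. by rewrite /sin_ratio /angle !mul0r sin0 mul0r. Qed.

Lemma sin_ratio_n : sin_ratio n = 0.
Proof. by rewrite /sin_ratio angle_n sinpi mul0r. Qed.

Lemma sin_ratio_gt0 k : (1 < n)%N -> (0 < k < n)%N -> 0 < sin_ratio k.
Proof. by move=> n_gt1 kn; rewrite divr_gt0 ?sin_angle_gt0 //; lia. Qed.

(* sin(v - t) sin(v + t) = sin(v)^2 - sin(t)^2 gives the recursion. *)
Lemma sin_ratio_rec k : (1 < n)%N -> (0 < k < n)%N ->
  sin_ratio k ^+ 2 = sin_ratio k.-1 * sin_ratio k.+1 + 1.
Proof.
move=> n_gt1; case: k => // k kn.
have s1_neq0 : sin (angle 1) != 0 by rewrite gt_eqF // sin_angle_gt0 //; lia.
have angleS j : angle j.+1 = angle j + angle 1.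
  by rewrite /angle -addn1 natrD !mulrDl mul1r.
have angle_pred : angle k = angle k.+1 - angle 1 by rewrite angleS addrK.
rewrite /sin_ratio /= angle_pred [angle k.+2]angleS.
move: s1_neq0; set v := angle k.+1; set t := angle 1 => s1_neq0.
have prod_sq : sin (v - t) * sin (v + t) = sin v ^+ 2 - sin t ^+ 2.
  rewrite sinB sinD.
  transitivity (sin v ^+ 2 * cos t ^+ 2 - cos v ^+ 2 * sin t ^+ 2); first by ring.
  by rewrite !cos2sin2; ring.
rewrite [RHS](_ : _ = (sin (v - t) * sin (v + t) + sin t ^+ 2) / sin t ^+ 2); last by field.
by rewrite prod_sq; field.
Qed.

End SineRatios.

Section PluckerExtremes.
Variable R : realType.
Variable n : nat.
Implicit Type X : 'M[R]_(2, n).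

Lemma mem_pluckers X (i j : 'I_n) : (i < j)%N -> plucker X i j \in pluckers X.
Proof.
move=> ij; apply/mapP; exists (i, j) => //.
by rewrite mem_filter /= ij; apply/allpairsP; exists (i, j); rewrite !mem_enum.
Qed.

Lemma pluckersP X d :
  d \in pluckers X -> exists i j : 'I_n, (i < j)%N /\ d = plucker X i j.
Proof. by case/mapP => -[i j]; rewrite mem_filter => /andP[ij _] ->; exists i, j. Qed.

Lemma min_plucker_le X (i j : 'I_n) : (i < j)%N -> min_plucker X <= plucker X i j.
Proof. by move=> ij; apply: ge_bigmin_seq => //; apply: mem_pluckers. Qed.

Lemma le_max_plucker X (i j : 'I_n) : (i < j)%N -> plucker X i j <= max_plucker X.
Proof. by move=> ij; apply: (le_bigmax_seq _ _ predT id (mem_pluckers X ij)). Qed.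

Hypothesis n_gt1 : (1 < n)%N.

Let head_pluckers X : head 0 (pluckers X) \in pluckers X.
Proof.
have := @mem_pluckers X (Ordinal (ltnW n_gt1)) (Ordinal n_gt1) isT.
by case: (pluckers X) => // d s _; rewrite mem_head.
Qed.

Lemma min_plucker_mem X : min_plucker X \in pluckers X.
Proof.
rewrite /min_plucker big_seq; elim/big_ind: _ => [|x y xs ys|//].
  exact: head_pluckers.
by rewrite minElt; case: ifP.
Qed.

Lemma max_plucker_mem X : max_plucker X \in pluckers X.
Proof.
rewrite /max_plucker big_seq; elim/big_ind: _ => [|x y xs ys|//].
  exact: head_pluckers.
by rewrite maxElt; case: ifP.
Qed.

Lemma min_plucker_gt0 X : totally_positive X -> 0 < min_plucker X.
Proof. by move=> X_pos; have [i [j [ij ->]]] := pluckersP (min_plucker_mem X); apply: X_pos. Qed.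

End PluckerExtremes.

Lemma prod_rot1 (R : comNzRingType) (f : nat -> R) n : f n = f 0%N ->
  \prod_(a < n) f (a + 1)%N = \prod_(a < n) f a.
Proof.
case: n => [|n] fn; first by rewrite !big_ord0.
rewrite big_ord_recr big_ord_recl /= addn1 fn mulrC.
by congr (_ * _); apply: eq_bigr => i _; rewrite addn1.
Qed.

Section TwistedPluckers.
Variable R : realType.
Variable n : nat.
Hypothesis n_gt0 : (0 < n)%N.
Variable X : 'M[R]_(2, n).

(* Extend the columns of X to all a : nat by column (a + n) = - column a.
   D a b = tplucker a b is the Plücker coordinate of the extended columns a and b. *)
Definition col_index (a : nat) : 'I_n := Ordinal (ltn_pmod a n_gt0).
Definition twist (a : nat) : R := (-1) ^+ (a %/ n).
Definition tplucker (a b : nat) : R :=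
  twist a * twist b * plucker X (col_index a) (col_index b).
Local Notation D := tplucker.

Lemma col_indexD a : col_index (a + n) = col_index a.
Proof. by apply: val_inj; rewrite /= modnDr. Qed.

Lemma twistD a : twist (a + n) = - twist a.
Proof. by rewrite /twist -[X in (a + X)%N]mul1n divnDMl // addn1 exprS mulN1r. Qed.

Lemma tplucker_periodic a b : D (a + n) (b + n) = D a b.
Proof. by rewrite /tplucker !col_indexD !twistD mulrNN. Qed.

Lemma tplucker_diag a : D a a = 0.
Proof. by rewrite /tplucker /plucker subrr mulr0. Qed.

Lemma tplucker_antiperiod a : D a (a + n) = 0.
Proof. by rewrite /tplucker col_indexD /plucker subrr mulr0. Qed.

Lemma tplucker_relation a b c d : D a c * D b d = D a b * D c d + D a d * D b c.
Proof. by rewrite /tplucker /plucker; ring. Qed.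

Lemma tplucker_window a b : (a < b < a + n)%N ->
  exists i j : 'I_n, (i < j)%N /\ D a b = plucker X i j.
Proof.
move=> /andP[ab ban].
have ea := divn_eq a n; have eb := divn_eq b n.
have ra := ltn_pmod a n_gt0; have rb := ltn_pmod b n_gt0.
have twist2 (e : nat) : (-1 : R) ^+ e * (-1) ^+ e = 1.
  by rewrite -exprMn mulrNN mulr1 expr1n.
have [same|next] := eqVneq (b %/ n)%N (a %/ n)%N.
  exists (col_index a), (col_index b); split; first by rewrite /=; nia.
  by rewrite /tplucker /twist same twist2 mul1r.
have bq : (b %/ n = (a %/ n).+1)%N by nia.
exists (col_index b), (col_index a); split; first by rewrite /=; nia.
by rewrite /tplucker /twist bq exprS mulN1r mulrN twist2 /plucker; ring.
Qed.

Hypothesis X_pos : totally_positive X.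

Lemma tplucker_gt0 a b : (a < b < a + n)%N -> 0 < D a b.
Proof. by case/tplucker_window => i [j [ij ->]]; apply: X_pos. Qed.

Lemma tplucker_ge0 a b : (a <= b <= a + n)%N -> 0 <= D a b.
Proof.
move=> /andP[ab ban].
have [->|ne] := eqVneq b a; first by rewrite tplucker_diag.
have [->|ne'] := eqVneq b (a + n)%N; first by rewrite tplucker_antiperiod.
by apply/ltW/tplucker_gt0; apply/andP; split; lia.
Qed.

Definition cycprod (k : nat) : R := \prod_(a < n) D a (a + k).

Lemma cycprod_shift j k : \prod_(a < n) D (a + j) (a + j + k) = cycprod k.
Proof.
elim: j => [|j IH]; first by apply: eq_bigr => a _; rewrite addn0.
rewrite -IH -(@prod_rot1 _ (fun a => D (a + j) (a + j + k))).
  by apply: eq_bigr => a _; congr D; lia.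
by rewrite /= add0n -[D j _]tplucker_periodic; congr D; lia.
Qed.

Lemma cycprod_ge0 k : (k <= n)%N -> 0 <= cycprod k.
Proof. by move=> kn; apply: prodr_ge0 => a _; apply: tplucker_ge0; lia. Qed.

Lemma cycprod0 : cycprod 0 = 0.
Proof. by rewrite /cycprod (bigD1 (Ordinal n_gt0)) //= addn0 tplucker_diag mul0r. Qed.

Lemma cycprod_n : cycprod n = 0.
Proof. by rewrite /cycprod (bigD1 (Ordinal n_gt0)) //= tplucker_antiperiod mul0r. Qed.

(* Multiplying the relation over a window: P_k^2 = prod_a (x_a + y_a),
   where prod x = P_{k+1} P_{k-1} and prod y = P_1^2. *)
Lemma cycprod_sq k : (0 < k < n)%N ->
  cycprod k ^+ 2 = \prod_(a < n) (D a (a + k.+1) * D a.+1 (a + k)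
                                 + D a (a + 1) * D (a + k) (a + k + 1)).
Proof.
case: k => // k _; rewrite expr2 {2}/cycprod -(cycprod_shift 1) -big_split /=.
apply: eq_bigr => a _.
by rewrite !(addn1, addnS, addSn) [LHS]mulrC (tplucker_relation a a.+1 (a + k).+1) addrC.
Qed.

Lemma cycprod_outer k : (0 < k)%N ->
  \prod_(a < n) (D a (a + k.+1) * D a.+1 (a + k)) = cycprod k.+1 * cycprod k.-1.
Proof.
case: k => // k _; rewrite big_split /= -(cycprod_shift 1 k); congr (_ * _).
by apply: eq_bigr => a _; congr D; lia.
Qed.

Lemma cycprod_inner k :
  \prod_(a < n) (D a (a + 1) * D (a + k) (a + k + 1)) = cycprod 1 ^+ 2.
Proof. by rewrite big_split /= (cycprod_shift k 1). Qed.

End TwistedPluckers.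

Section LowerBound.
Variable R : realType.
Variable n : nat.
Hypothesis n_gt1 : (1 < n)%N.
Variable X : 'M[R]_(2, n).
Hypothesis X_pos : totally_positive X.

Let n_gt0 : (0 < n)%N. Proof. exact: ltnW. Qed.
Let P : nat -> R := cycprod n_gt0 X.

(* Each P_k, 0 < k < n, is a product of n Plücker coordinates of X. *)
Lemma cycprod_bounds k : (0 < k < n)%N ->
  min_plucker X ^+ n <= P k <= max_plucker X ^+ n.
Proof.
move=> kn; have const_prod c : c ^+ n = \prod_(a < n) c by rewrite prodr_const card_ord.
rewrite !const_prod; apply/andP; split; apply: ler_prod => a _.
all: have /(tplucker_window n_gt0 X)[i [j [ij ->]]] : (a < a + k < a + n)%N by lia.
- by rewrite ltW ?min_plucker_gt0 // min_plucker_le.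
- by rewrite ltW ?X_pos // le_max_plucker.
Qed.

Definition gm (k : nat) : R := nroot n (P k).

Lemma gm_pow k : (k <= n)%N -> gm k ^+ n = P k.
Proof. by move=> kn; rewrite nrootK ?cycprod_ge0. Qed.

Lemma gm_ge0 k : 0 <= gm k. Proof. exact: nroot_ge0. Qed.

Lemma gm_zero k : P k = 0 -> gm k = 0.
Proof. by move=> Pk; rewrite /gm /nroot Pk powR0 // invr_eq0 pnatr_eq0 -lt0n. Qed.

(* g is a supersolution of g_k^2 = g_{k-1} g_{k+1} + g_1^2, by
   superadditivity of the geometric mean applied to cycprod_sq. *)
Lemma gm_supersolution k : (0 < k < n)%N ->
  gm k.-1 * gm k.+1 + gm 1 ^+ 2 <= gm k ^+ 2.
Proof.
move=> kn.
rewrite -(ler_pXn2r n_gt0) ?nnegrE ?addr_ge0 ?mulr_ge0 ?exprn_ge0 ?gm_ge0 //.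
rewrite -exprM mulnC exprM gm_pow; last lia.
rewrite cycprod_sq //; apply: geomean_superadditive => //.
- by move=> a; apply: mulr_ge0; apply: (tplucker_ge0 _ X_pos); lia.
- by move=> a; apply: mulr_gt0; apply: (tplucker_gt0 _ X_pos); lia.
- by rewrite mulr_ge0 ?gm_ge0.
- by rewrite exprn_ge0 ?gm_ge0.
- by rewrite cycprod_outer ?exprMn ?gm_pow 1?mulrC //; lia.
- by rewrite cycprod_inner -exprM mulnC exprM gm_pow.
Qed.

Lemma gm_bounds k : (0 < k < n)%N -> min_plucker X <= gm k <= max_plucker X.
Proof.
move=> kn; have lo_gt0 := min_plucker_gt0 n_gt1 X_pos.
have hi_ge0 : 0 <= max_plucker X.
  have ij : (Ordinal n_gt0 < Ordinal n_gt1)%N by [].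
  exact: le_trans (ltW (X_pos ij)) (le_max_plucker X ij).
have /andP[lo_P P_hi] := cycprod_bounds kn.
have k_le : (k <= n)%N by lia.
by apply/andP; split; rewrite -(ler_pXn2r n_gt0) ?nnegrE ?gm_ge0 ?(ltW lo_gt0) // gm_pow.
Qed.

Lemma sin_ratio_le_lossE m : (0 < m < n)%N -> sin_ratio R n m <= lossE X.
Proof.
move=> mn; rewrite ler_pdivlMr ?min_plucker_gt0 //.
have := comparison_principle n_gt1 (gm_zero (cycprod0 n_gt0 X)) (gm_zero (cycprod_n n_gt0 X))
  (sin_ratio0 R n) (sin_ratio_n R n_gt0) (fun k => sin_ratio_gt0 R n_gt0 n_gt1)
  (fun k _ => gm_ge0 k) (fun k => sin_ratio_rec R n_gt0 n_gt1) gm_supersolution mn.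
have /andP[lo_g1 _] := @gm_bounds 1 n_gt1.
have /andP[_ gm_hi] := gm_bounds mn.
move=> comparison; apply: le_trans gm_hi; apply: le_trans comparison.
by rewrite ler_wpM2l // ltW // sin_ratio_gt0.
Qed.

End LowerBound.

Section CyclicMatrix.
Variable R : realType.
Variable n : nat.
Let C := cyclicC R n.

Lemma plucker_cyclic (i j : 'I_n) : (i < j)%N -> plucker C i j = sin (angle R n (j - i)).
Proof.
move=> ij; rewrite /plucker /C !mxE /= /angle natrB ?(ltnW ij) // !mulrBl sinB.
by rewrite [in LHS]mulrC.
Qed.

Lemma plucker_cyclic_bounds (i j : 'I_n) : (i < j)%N ->
  sin (angle R n 1) <= plucker C i j <= sin (angle R n n./2).
Proof.
move=> ij; rewrite plucker_cyclic //.
by apply: sin_angle_bounds; have := ltn_ord j; lia.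
Qed.

Lemma cyclic_totally_positive : totally_positive C.
Proof.
move=> i j ij; rewrite plucker_cyclic // sin_angle_gt0 //; have := ltn_ord j; lia.
Qed.

Hypothesis n_gt1 : (1 < n)%N.

Lemma half_bounds : (0 < n./2 < n)%N.
Proof. by have := odd_double_half n; rewrite -addnn; case: (odd n) => /=; lia. Qed.

Lemma min_plucker_cyclic : min_plucker C = sin (angle R n 1).
Proof.
apply/le_anti/andP; split.
  have := @min_plucker_le _ _ C (Ordinal (ltnW n_gt1)) (Ordinal n_gt1) isT.
  by rewrite plucker_cyclic.
have [i [j [ij ->]]] := pluckersP (min_plucker_mem n_gt1 C).
by case/andP: (plucker_cyclic_bounds ij).
Qed.

Lemma max_plucker_cyclic : max_plucker C = sin (angle R n n./2).
Proof.
have /andP[half_gt0 half_lt] := half_bounds.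
apply/le_anti/andP; split; last first.
  have := @le_max_plucker _ _ C (Ordinal (ltnW n_gt1)) (Ordinal half_lt) half_gt0.
  by rewrite plucker_cyclic //= subn0.
have [i [j [ij ->]]] := pluckersP (max_plucker_mem n_gt1 C).
by case/andP: (plucker_cyclic_bounds ij).
Qed.

Lemma lossE_cyclic : lossE C = sin_ratio R n n./2.
Proof. by rewrite /lossE min_plucker_cyclic max_plucker_cyclic. Qed.

End CyclicMatrix.

Unset Implicit Arguments.

Theorem mainTheorem1 (R : realType) (n : nat) (hn : (3 <= n)%N) :
  totally_positive (cyclicC R n) /\
  lossE (cyclicC R n) = sin ((n./2)%:R * pi / n%:R) / sin (pi / n%:R) /\
  (forall X : 'M[R]_(2, n), totally_positive X -> lossE (cyclicC R n) <= lossE X).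
Proof.
have n_gt1 : (1 < n)%N by apply: leq_trans hn.
split; first exact: cyclic_totally_positive.
rewrite lossE_cyclic //; split; first by rewrite /sin_ratio /angle mul1r.
by move=> X X_pos; apply: sin_ratio_le_lossE => //; apply: half_bounds.
Qed.
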